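(* Let $F$ be an $N=(2,2)$ full vertex operator superalgebra with $c,\bar c\ne0$ and $d=G^+_{-1/2}+\bar G^+_{-1/2}$. Let $r,s\in\mathbb R$ and let $v=\sum_{(p,q)}v_{(p,q)}$ be a nonzero finite sum with $v_{(p,q)}\in F^{(p,q)}_{r+\frac p2,\,s+\frac q2}$. If $dv=0$ and $(r,s)\ne(0,0)$, then $v\in\mathrm{Im}\,d$.
   Context: A full vertex operator superalgebra is $F=\bigoplus_{(h,\bar h)\in\mathbb R^2}F_{h,\bar h}$ with $F_{0,0}=\mathbb C\mathbf 1$, $F_{h,\bar h}=0$ unless $h-\bar h\in\frac12\mathbb Z$, $\sum_{h+\bar h<K}\dim F_{h,\bar h}<\infty$, bounded below bigrading; parity $|a|=2(h-\bar h)\bmod 2$; even full vertex operator $Y(a,\underline z)=\sum_{r,s\in\mathbb R}a(r,s)z^{-r-1}\bar z^{-s-1}$ with vacuum $\mathbf 1$ satisfying Moriwaki's axioms (vacuum axioms; matrix coefficients of $Y(a,\underline z_1)Y(b,\underline z_2)c$, $Y(Y(a,\underline z_1-\underline z_2)b,\underline z_2)c$, $(-1)^{|a||b|}Y(b,\underline z_2)Y(a,\underline z_1)c$ converge in the respective domains to one real-analytic function on $\{z_1\ne z_2,z_1z_2\ne0\}$); conformal vectors $\omega\in F_{2,0},\bar\omega\in F_{0,2}$ with commuting Virasoro modes $L(n)=\omega(n+1,-1)$, $\bar L(n)=\bar\omega(-1,n+1)$ of central charges $c,\bar c$, $L(0),\bar L(0)$ acting on $F_{h,\bar h}$ by $h,\bar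 h$. An $N=(2,2)$ structure: holomorphic $\tau^\pm\in F_{3/2,0}$, $J\in F_{1,0}$ and antiholomorphic $\bar\tau^\pm\in F_{0,3/2},\bar J\in F_{0,1}$ with modes $G^\pm_r,J_n$ and $\bar G^\pm_r,\bar J_n$ ($Y(\tau^\pm,\underline z)=\sum_{r\in\frac12+\mathbb Z}G^\pm_rz^{-r-3/2}$, $Y(J,\underline z)=\sum J_nz^{-n-1}$, barred in $\bar z$) satisfying two supercommuting copies of the $N=2$ Neveu–Schwarz relations ($[J_m,J_n]=\frac c3m\delta_{m+n,0}$, $[J_m,G^\pm_r]=\pm G^\pm_{m+r}$, $[L_m,G^\pm_r]=(\frac m2-r)G^\pm_{m+r}$, $[L_m,J_n]=-nJ_{m+n}$, $[G^\pm_r,G^\pm_s]_+=0$, $[G^+_r,G^-_s]_+=L_{r+s}+\frac12(r-s)J_{r+s}+\frac c6(r^2-\frac14)\delta_{r+s,0}$; barred with $\bar c$), $J_0,\bar J_0$ semisimple with real eigenvalues, $J_0-\bar J_0$ integral and $\exp(\pi i(J_0-\bar J_0))$ the parity operator. $F^{(p,q)}_{h,\bar h}=\{v\in F_{h,\bar h}:J_0v=pv,\ \bar J_0v=qv\}$. *)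

From HB Require Import structures.
From mathcomp Require Import all_boot all_order all_algebra.
From mathcomp Require Import reals complex.

Set Implicit Arguments.
Unset Strict Implicit.
Unset Printing Implicit Defensive.

Import Order.TTheory GRing.Theory Num.Theory.
Local Open Scope ring_scope.
Local Open Scope complex_scope.

(* F is modelled by a C-vector space V (an lmodType over R[i]);
   the vertex operator Y(a,z) = sum_{r,s in R} a(r,s) z^{-r-1} zbar^{-s-1}
   is given by its modes:  Y a r s c  =  a(r,s) c. *)

Section FullVOSA.
Variables (R : realType) (V : lmodType R[i]).

Definition Ymodes := V -> R -> R -> V -> V.

(* Half-integral modes G^{+/-}_r,
   r in 1/2 + Z, are indexed by k : int with  r = k + 1/2, i.e.
   Gp k = G^+_{k+1/2}, Gm k = G^-_{k+1/2}. *)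
Definition hz (k : int) : R[i] := k%:~R + 2^-1.

Definition delta0 (m : int) : R[i] := (m == 0)%:R.

Record NS2 (L J Gp Gm : int -> V -> V) (c : R[i]) : Prop := {
  ns_LL : forall (m n : int) v, L m (L n v) - L n (L m v) =
     (m - n)%:~R *: L (m + n) v + (c / 12%:R * (m ^+ 3 - m)%:~R * delta0 (m + n)) *: v;
  ns_JJ : forall (m n : int) v, J m (J n v) - J n (J m v) =
     (c / 3%:R * m%:~R * delta0 (m + n)) *: v;
  ns_JGp : forall (m k : int) v, J m (Gp k v) - Gp k (J m v) = Gp (m + k) v;
  ns_JGm : forall (m k : int) v, J m (Gm k v) - Gm k (J m v) = - Gm (m + k) v;
  ns_LGp : forall (m k : int) v, L m (Gp k v) - Gp k (L m v) =
     (m%:~R / 2%:R - hz k) *: Gp (m + k) v;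
  ns_LGm : forall (m k : int) v, L m (Gm k v) - Gm k (L m v) =
     (m%:~R / 2%:R - hz k) *: Gm (m + k) v;
  ns_LJ : forall (m n : int) v, L m (J n v) - J n (L m v) = - (n%:~R) *: J (m + n) v;
  ns_GpGp : forall (k l : int) v, Gp k (Gp l v) + Gp l (Gp k v) = 0;
  ns_GmGm : forall (k l : int) v, Gm k (Gm l v) + Gm l (Gm k v) = 0;
  ns_GpGm : forall (k l : int) v, Gp k (Gm l v) + Gm l (Gp k v) =
     L (k + l + 1) v + ((hz k - hz l) / 2%:R) *: J (k + l + 1) v
     + (c / 6%:R * (hz k ^+ 2 - 4%:R^-1) * delta0 (k + l + 1)) *: v
}.

Inductive n2gen := gL of int | gJ of int | gGp of int | gGm of int.

Definition n2op (L J Gp Gm : int -> V -> V) (g : n2gen) : V -> V :=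
  match g with gL m => L m | gJ m => J m | gGp k => Gp k | gGm k => Gm k end.

Definition n2odd (g : n2gen) : bool :=
  match g with gGp _ | gGm _ => true | _ => false end.

Definition scomm (A B : V -> V) (both_odd : bool) : Prop :=
  forall v, A (B v) = (if both_odd then - B (A v) else B (A v)).

Definition holL (Y : Ymodes) (a : V) (n : int) := Y a (n%:~R + 1) (-1).
Definition ahL  (Y : Ymodes) (a : V) (n : int) := Y a (-1) (n%:~R + 1).
Definition holJ (Y : Ymodes) (a : V) (n : int) := Y a n%:~R (-1).
Definition ahJ  (Y : Ymodes) (a : V) (n : int) := Y a (-1) n%:~R.
(* Y(tau,z) = sum_r G_r z^{-r-3/2}, so G_{k+1/2} = tau(k+1,-1) *)
Definition holG (Y : Ymodes) (a : V) (k : int) := Y a (k%:~R + 1) (-1).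
Definition ahG  (Y : Ymodes) (a : V) (k : int) := Y a (-1) (k%:~R + 1).

(* F_{h,hbar}: L(0) = omega(1,-1) acts by h, Lbar(0) = omegabar(-1,1) by hbar *)
Definition Fsp (Y : Ymodes) (om omb : V) (h hb : R) (v : V) : Prop :=
  Y om 1 (-1) v = h%:C *: v /\ Y omb (-1) 1 v = hb%:C *: v.

Definition Fpq (Y : Ymodes) (om omb Jv Jbv : V) (h hb p q : R) (v : V) : Prop :=
  Fsp Y om omb h hb v /\ Y Jv 0 (-1) v = p%:C *: v /\ Y Jbv (-1) 0 v = q%:C *: v.

Definition is_holo (Y : Ymodes) (a : V) : Prop :=
  forall r s c, s <> -1 -> Y a r s c = 0.
Definition is_antiholo (Y : Ymodes) (a : V) : Prop :=
  forall r s c, r <> -1 -> Y a r s c = 0.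
Definition is_int (x : R) : Prop := exists k : int, x = k%:~R.

Record N22FVOSA : Type := {
  Y : Ymodes;
  vac : V;
  om : V; omb : V;
  taup : V; taum : V; Jv : V;
  taubp : V; taubm : V; Jbv : V;
  cc : R[i]; cbar : R[i];
  Y_linl : forall r s c x a b, Y (x *: a + b) r s c = x *: Y a r s c + Y b r s c;
  Y_linr : forall a r s x c d, Y a r s (x *: c + d) = x *: Y a r s c + Y a r s d;
  decomp : forall v, exists (n : nat) (h hb p q : 'I_n -> R) (w : 'I_n -> V),
      (forall i, Fpq Y om omb Jv Jbv (h i) (hb i) (p i) (q i) (w i)) /\ v = \sum_(i < n) w i;
  F00 : forall v, Fsp Y om omb 0 0 v <-> exists x, v = x *: vac;
  spin : forall h hb v, Fsp Y om omb h hb v -> v <> 0 -> is_int (2%:R * (h - hb));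
  fin : forall K : R, exists s : seq V, forall h hb v, Fsp Y om omb h hb v -> h + hb < K ->
      exists x : 'I_(size s) -> R[i], v = \sum_(i < size s) x i *: s`_i;
  bdd : exists N : R, forall h hb v, Fsp Y om omb h hb v -> v <> 0 -> N <= h /\ N <= hb;
  Y_grade : forall h1 hb1 h2 hb2 a b r s, Fsp Y om omb h1 hb1 a -> Fsp Y om omb h2 hb2 b ->
      Fsp Y om omb (h1 + h2 - r - 1) (hb1 + hb2 - s - 1) (Y a r s b);
  (* vacuum axioms: Y(1,z) = id, Y(a,z)1 in F[[z,zbar]], Y(a,z)1|_{z=0} = a *)
  vac_id : forall r s c, Y vac r s c = (if (r == -1) && (s == -1) then c else 0);
  vac_creat : forall a r s, ~ (exists i j : nat, r = - (i%:R) - 1 /\ s = - (j%:R) - 1) ->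
      Y a r s vac = 0;
  vac_lim : forall a, Y a (-1) (-1) vac = a;
  om_wt : Fsp Y om omb 2%:R 0 om;  omb_wt : Fsp Y om omb 0 2%:R omb;
  taup_wt : Fsp Y om omb (3%:R / 2%:R) 0 taup;  taum_wt : Fsp Y om omb (3%:R / 2%:R) 0 taum;
  J_wt : Fsp Y om omb 1 0 Jv;
  taubp_wt : Fsp Y om omb 0 (3%:R / 2%:R) taubp;  taubm_wt : Fsp Y om omb 0 (3%:R / 2%:R) taubm;
  Jb_wt : Fsp Y om omb 0 1 Jbv;
  taup_holo : is_holo Y taup; taum_holo : is_holo Y taum; J_holo : is_holo Y Jv;
  taubp_ah : is_antiholo Y taubp; taubm_ah : is_antiholo Y taubm; Jb_ah : is_antiholo Y Jbv;
  taup_supp : forall r c, ~ is_int r -> Y taup r (-1) c = 0;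
  taum_supp : forall r c, ~ is_int r -> Y taum r (-1) c = 0;
  J_supp : forall r c, ~ is_int r -> Y Jv r (-1) c = 0;
  taubp_supp : forall s c, ~ is_int s -> Y taubp (-1) s c = 0;
  taubm_supp : forall s c, ~ is_int s -> Y taubm (-1) s c = 0;
  Jb_supp : forall s c, ~ is_int s -> Y Jbv (-1) s c = 0;
  ns_hol : NS2 (holL Y om) (holJ Y Jv) (holG Y taup) (holG Y taum) cc;
  ns_ah : NS2 (ahL Y omb) (ahJ Y Jbv) (ahG Y taubp) (ahG Y taubm) cbar;
  ns_scomm : forall g g' : n2gen,
      scomm (n2op (holL Y om) (holJ Y Jv) (holG Y taup) (holG Y taum) g)
            (n2op (ahL Y omb) (ahJ Y Jbv) (ahG Y taubp) (ahG Y taubm) g')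
            (n2odd g && n2odd g');
  (* J_0 - Jbar_0 integral and exp(pi i (J_0 - Jbar_0)) = parity (-1)^{2(h-hbar)} *)
  parity : forall h hb p q v, Fpq Y om omb Jv Jbv h hb p q v -> v <> 0 ->
      exists k l : int, p - q = k%:~R /\ 2%:R * (h - hb) = (k + 2 * l)%:~R
}.

Definition FPQ (F : N22FVOSA) h hb p q v := Fpq (Y F) (om F) (omb F) (Jv F) (Jbv F) h hb p q v.
Definition dd (F : N22FVOSA) (v : V) : V :=
  holG (Y F) (taup F) (-1) v + ahG (Y F) (taubp F) (-1) v.

End FullVOSA.

From HB Require Import structures.
From mathcomp Require Import all_boot all_order all_algebra.
From mathcomp Require Import reals complex.
From mathcomp Require Import ring.
Set Implicit Arguments.
Unset Strict Implicit.

Import Order.TTheory GRing.Theory Num.Theory.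
Local Open Scope ring_scope.
Local Open Scope complex_scope.

(* Let K = G^-_{1/2}.  Since Gbar^+_{-1/2} anticommutes with K, the
   anticommutator of d with K is [G^+_{-1/2}, G^-_{1/2}]_+ = L_0 - J_0/2, which
   acts on each v_(p,q) by r.  Hence dv = 0 gives d(Kv) = rv, and v = d(Kv/r)
   when r <> 0; when r = 0, then s <> 0 and Kbar = Gbar^-_{1/2} does the same. *)

Section Homotopy.
Variables (K : fieldType) (V : lmodType K).

Lemma anticomm_sum (A B : {additive V -> V}) (x : K) n (v : 'I_n -> V) :
    (forall i, A (B (v i)) + B (A (v i)) = x *: v i) ->
  A (B (\sum_(i < n) v i)) + B (A (\sum_(i < n) v i)) = x *: \sum_(i < n) v i.
Proof.
move=> ABv; rewrite scaler_sumr !raddf_sum -big_split.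
by apply: eq_bigr => i _; exact: ABv.
Qed.

Lemma homotopy_cycle_boundary (D1 D2 : {linear V -> V}) (H : {additive V -> V})
    (x : K) (w : V) :
    x != 0 -> D1 (H w) + H (D1 w) = x *: w -> D2 (H w) + H (D2 w) = 0 ->
  D1 w + D2 w = 0 -> w = D1 (x^-1 *: H w) + D2 (x^-1 *: H w).
Proof.
move=> x_neq0 D1H D2H dw0.
have dHw : D1 (H w) + D2 (H w) = x *: w.
  by rewrite -D1H -[RHS]addr0 -D2H addrACA -raddfD dw0 raddf0 addr0.
by rewrite !linearZ -scalerDr dHw scalerA mulVf ?scale1r.
Qed.

End Homotopy.

Section NS2Anticommutator.
Variables (R : realType) (V : lmodType R[i]) (L J Gp Gm : int -> V -> V) (c : R[i]).
Hypothesis ns : NS2 L J Gp Gm c.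

(* The central term carries the factor hz(-1)^2 - 1/4 = (-1/2)^2 - 1/4 = 0. *)
Lemma NS2_GpGm_zero_mode v :
  Gp (-1) (Gm 0 v) + Gm 0 (Gp (-1) v) = L 0 v - 2^-1 *: J 0 v.
Proof.
rewrite (ns_GpGm ns) /delta0 addr0 addNr /= mulr1.
have -> : (hz R (-1) - hz R 0) / 2%:R = - 2^-1 by rewrite /hz; field.
have -> : hz R (-1) ^+ 2 - 4%:R^-1 = 0 by rewrite /hz; field.
by rewrite mulr0 scale0r addr0 scaleNr.
Qed.

Lemma NS2_GpGm_eigen (x p : R) u :
    L 0 u = (x + p / 2%:R)%:C *: u -> J 0 u = p%:C *: u ->
  Gp (-1) (Gm 0 u) + Gm 0 (Gp (-1) u) = x%:C *: u.
Proof.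
move=> Lu Ju; rewrite NS2_GpGm_zero_mode Lu Ju scalerA -scalerBl; congr (_ *: _).
by rewrite rmorphD rmorphM fmorphV rmorph_nat; field.
Qed.

End NS2Anticommutator.

Section N22.
Variables (R : realType) (V : lmodType R[i]) (F : N22FVOSA V).

Lemma Y_linear a r s : linear (Y F a r s).
Proof. by move=> x u w; exact: Y_linr. Qed.

HB.instance Definition _ a r s :=
  GRing.isLinear.Build R[i] V V *:%R (Y F a r s) (Y_linear a r s).

Local Notation Gp := (holG (Y F) (taup F) (-1)).
Local Notation Gm := (holG (Y F) (taum F) 0).
Local Notation Gbp := (ahG (Y F) (taubp F) (-1)).
Local Notation Gbm := (ahG (Y F) (taubm F) 0).

Lemma Gp_Gm_anticomm_sum (r s : R) n (p q : 'I_n -> R) (v : 'I_n -> V) :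
    (forall i, FPQ F (r + p i / 2%:R) (s + q i / 2%:R) (p i) (q i) (v i)) ->
  Gp (Gm (\sum_(i < n) v i)) + Gm (Gp (\sum_(i < n) v i)) = r%:C *: \sum_(i < n) v i.
Proof.
move=> v_pq; apply: anticomm_sum => i.
have [[Lv _] [Jv _]] := v_pq i.
apply: (NS2_GpGm_eigen (ns_hol F) (p := p i)) => //.
by rewrite /holL add0r.
Qed.

Lemma Gbp_Gbm_anticomm_sum (r s : R) n (p q : 'I_n -> R) (v : 'I_n -> V) :
    (forall i, FPQ F (r + p i / 2%:R) (s + q i / 2%:R) (p i) (q i) (v i)) ->
  Gbp (Gbm (\sum_(i < n) v i)) + Gbm (Gbp (\sum_(i < n) v i)) = s%:C *: \sum_(i < n) v i.
Proof.
move=> v_pq; apply: anticomm_sum => i.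
have [[_ Lv] [_ Jv]] := v_pq i.
apply: (NS2_GpGm_eigen (ns_ah F) (p := q i)) => //.
by rewrite /ahL add0r.
Qed.

Lemma Gbp_Gm_anticomm u : Gbp (Gm u) + Gm (Gbp u) = 0.
Proof.
have anti : Gm (Gbp u) = - Gbp (Gm u) := ns_scomm F (gGm 0) (gGp (-1)) u.
by rewrite anti addrN.
Qed.

Lemma Gp_Gbm_anticomm u : Gp (Gbm u) + Gbm (Gp u) = 0.
Proof.
have anti : Gp (Gbm u) = - Gbm (Gp u) := ns_scomm F (gGp (-1)) (gGm 0) u.
by rewrite anti addNr.
Qed.

End N22.

Theorem lemma2p7 (R : realType) (V : lmodType R[i]) (F : N22FVOSA V)
  (r s : R) (n : nat) (p q : 'I_n -> R) (v : 'I_n -> V) :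
  cc F <> 0 -> cbar F <> 0 ->
  (forall i, FPQ F (r + p i / 2%:R) (s + q i / 2%:R) (p i) (q i) (v i)) ->
  \sum_(i < n) v i <> 0 ->
  dd F (\sum_(i < n) v i) = 0 ->
  (r, s) <> (0, 0) ->
  exists u : V, \sum_(i < n) v i = dd F u.
Proof.
move=> _ _ v_pq _ dv0 rs_neq0.
have [r0 | r_neq0] := eqVneq r 0.
- have s_neq0 : s != 0 by apply: contra_notN rs_neq0 => /eqP s0; rewrite r0 s0.
  exists ((s%:C)^-1 *: ahG (Y F) (taubm F) 0 (\sum_(i < n) v i)).
  rewrite /dd addrC; apply: homotopy_cycle_boundary (Gbp_Gbm_anticomm_sum v_pq) _ _.
  + by rewrite fmorph_eq0.
  + exact: Gp_Gbm_anticomm.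
  + by rewrite addrC.
- exists ((r%:C)^-1 *: holG (Y F) (taum F) 0 (\sum_(i < n) v i)).
  apply: homotopy_cycle_boundary (Gp_Gm_anticomm_sum v_pq) (Gbp_Gm_anticomm _ _) dv0.
  by rewrite fmorph_eq0.
Qed.
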